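(* Suppose that a concave kite central configuration of the planar Newtonian 4-body problem has two pairs of equal masses, with mass values $1$ and $m>0$. Then one pair of equal masses lies at the endpoints of the base of an isosceles triangle, and the other pair lies on the symmetry axis of the base, with one body of this pair inside the triangle formed by the other three bodies.
   Context: Bodies with positive masses $m_i$ at positions $q_i\in\mathbb{R}^2$, $i=1,\dots,4$, with $r_{ij}=|q_i-q_j|$. A configuration is a central configuration if there is a constant $\lambda$ with $-\lambda m_j(q_j-c)=\sum_{i\neq j} m_im_j(q_i-q_j)/r_{ij}^3$ for all $j$, where $c=\sum m_iq_i/\sum m_i$. A non-collinear configuration is a kite if it has a symmetry axis passing through two of the four bodies; it is concave if one body lies inside the triangle formed by the other three. *)

From mathcomp Require Import all_boot all_order all_algebra.
From mathcomp Require Import reals.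
Set Implicit Arguments. Unset Strict Implicit. Unset Printing Implicit Defensive.
Import Order.TTheory GRing.Theory Num.Theory.
Local Open Scope ring_scope.

Section FourBody.
Variable R : realType.

Definition pt := 'rV[R]_2.

Definition dot (u v : pt) : R := \sum_(k < 2) u 0 k * v 0 k.
Definition dist (u v : pt) : R := Num.sqrt (dot (u - v) (u - v)).

Definition cmass (mass : 'I_4 -> R) (q : 'I_4 -> pt) : pt :=
  (\sum_(i < 4) mass i)^-1 *: \sum_(i < 4) (mass i *: q i).

Definition central_config (mass : 'I_4 -> R) (q : 'I_4 -> pt) : Prop :=
  exists lambda : R, forall j : 'I_4,
    - (lambda * mass j) *: (q j - cmass mass q) =
    \sum_(i < 4 | i != j) ((mass i * mass j) / dist (q i) (q j) ^+ 3) *: (q i - q j).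

Definition collinear_config (q : 'I_4 -> pt) : Prop :=
  exists (p d : pt), d != 0 /\ forall i : 'I_4, exists t : R, q i = p + t *: d.

Definition reflect_line (a b p : pt) : pt :=
  let d := b - a in
  a + ((2 * dot (p - a) d / dot d d) *: d - (p - a)).

Definition kite (q : 'I_4 -> pt) : Prop :=
  ~ collinear_config q /\
  exists a b : 'I_4, q a != q b /\
    forall i : 'I_4, exists j : 'I_4, reflect_line (q a) (q b) (q i) = q j.

Definition in_triangle (p x y z : pt) : Prop :=
  exists s t u : R, 0 < s /\ 0 < t /\ 0 < u /\ s + t + u = 1 /\
    p = s *: x + t *: y + u *: z.

Definition concave (q : 'I_4 -> pt) : Prop :=
  exists i j k l : 'I_4, uniq [:: i; j; k; l] /\ in_triangle (q l) (q i) (q j) (q k).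

End FourBody.

From mathcomp Require Import all_boot all_order all_algebra.
From mathcomp Require Import reals.
From mathcomp Require Import ring lra.

(* Let a, b be the bodies on the symmetry axis and c, d the mirror pair off it.
   A body strictly on one side of the axis cannot lie inside the triangle of
   the others, which are all weakly on the other side; so the interior body is
   a or b, say b.  Projecting the central configuration equations at a and at
   b onto the normal of the axis gives (m_c - m_d) (lambda / M - r_ac^-3) = 0
   and the same with r_bc.  If m_c <> m_d, then r_ac = r_bc, so c and d lie on
   the perpendicular bisector of ab, which separates a from b, and b cannot be
   inside the triangle c d a.  Hence m_c = m_d, and since the masses are
   1, 1, m, m, also m_a = m_b. *)

Set Implicit Arguments.
Unset Strict Implicit.
Unset Printing Implicit Defensive.

Import Order.TTheory GRing.Theory Num.Theory.
Local Open Scope ring_scope.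

Lemma uniq_swap (T : eqType) (x y : T) (s : seq T) :
  uniq [:: x, y & s] = uniq [:: y, x & s].
Proof.
by rewrite /= !inE !negb_or eq_sym; case: (y == x); case: (x \in s); case: (y \in s).
Qed.

Lemma uniq4_extend (a b : 'I_4) : a != b -> exists c d : 'I_4, uniq [:: a; b; c; d].
Proof.
move=> ab; set others := enum [predC [:: a; b]].
have : size others = 2.
  rewrite -cardE; apply/eqP; rewrite -(eqn_add2l #|[:: a; b]|) cardC card_ord.
  by rewrite (card_uniqP _) //= inE ab.
case E : others => [|c [|d []]] // _; exists c, d.
have : uniq others by exact: enum_uniq.
have : all [predC [:: a; b]] others by apply/allP => x; rewrite mem_enum.
rewrite E /= !inE !negb_or => /and3P[/andP[ca cb] /andP[da db] _] /andP[cd _].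
by rewrite !(eq_sym a) !(eq_sym b) ab ca cb da db cd.
Qed.

Lemma uniq4_cover {a b c d : 'I_4} : uniq [:: a; b; c; d] ->
  forall x, [\/ x = a, x = b, x = c | x = d].
Proof.
move=> u x.
have card_abcd : #|[:: a; b; c; d]| = #|predT : {pred 'I_4}|.
  by rewrite (card_uniqP u) cardT size_enum_ord.
have /(subset_cardP card_abcd) abcdT : [:: a; b; c; d] \subset (predT : {pred 'I_4}).
  exact/subsetP.
have : x \in [:: a; b; c; d] by rewrite abcdT.
by rewrite !inE => /or4P[] /eqP; [constructor 1|constructor 2|constructor 3|constructor 4].
Qed.

Lemma sum4 {V : zmodType} {a b c d : 'I_4} (F : 'I_4 -> V) : uniq [:: a; b; c; d] ->
  \sum_(i < 4) F i = F a + F b + F c + F d.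
Proof.
move=> u; have abcd : perm_eq [:: a; b; c; d] (enum 'I_4).
  apply: uniq_perm => //; first exact: enum_uniq.
  by move=> x; rewrite mem_enum !inE; case: (uniq4_cover u x) => ->; rewrite eqxx ?orbT.
by rewrite -big_enum -(perm_big _ abcd) !big_cons big_nil /= addr0 !addrA.
Qed.

Lemma sum4_neq {V : zmodType} {a b c d : 'I_4} (F : 'I_4 -> V) : uniq [:: a; b; c; d] ->
  \sum_(i < 4 | i != a) F i = F b + F c + F d.
Proof.
move=> u; rewrite big_mkcond (sum4 _ u) /= eqxx add0r.
move: u; rewrite /= !inE !negb_or => /and4P[/and3P[ab ac ad] _ _ _].
by rewrite !(eq_sym _ a) ab ac ad.
Qed.

Section Plane.
Variable R : realType.
Implicit Types (u v w n o p x y z : pt R) (s t K : R).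

Lemma row2_eq u v : u 0 0 = v 0 0 -> u 0 1 = v 0 1 -> u = v.
Proof.
move=> e0 e1; apply/rowP => -[[|[|//]] k2].
  by rewrite (_ : Ordinal k2 = 0) //; apply/val_inj.
by rewrite (_ : Ordinal k2 = 1) //; apply/val_inj.
Qed.

Lemma dotE u v : dot u v = u 0 0 * v 0 0 + u 0 1 * v 0 1.
Proof.
rewrite /dot big_ord_recr big_ord1 /=.
by congr (u 0 _ * v 0 _ + u 0 _ * v 0 _); apply/val_inj.
Qed.

Lemma dotBr u v w : dot u (v - w) = dot u v - dot u w.
Proof. by rewrite !dotE !mxE; ring. Qed.

Lemma dotZl s u v : dot (s *: u) v = s * dot u v.
Proof. by rewrite !dotE !mxE; ring. Qed.

Lemma dotr0 u : dot u 0 = 0.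
Proof. by rewrite -(subrr u) dotBr subrr. Qed.

Lemma dot_ge0 u : 0 <= dot u u.
Proof. by rewrite dotE addr_ge0 // -expr2 sqr_ge0. Qed.

Lemma dot_eq0 u : (dot u u == 0) = (u == 0).
Proof.
apply/eqP/eqP => [|->]; last exact: dotr0.
rewrite dotE => /eqP; rewrite paddr_eq0 -?expr2 ?sqr_ge0 // !sqrf_eq0.
by move=> /andP[/eqP u0 /eqP u1]; apply: row2_eq; rewrite mxE.
Qed.

Lemma dist_ge0 u v : 0 <= dist u v.
Proof. exact: sqrtr_ge0. Qed.

Lemma dist_eq u v u' v' :
  dist u v = dist u' v' <-> dot (u - v) (u - v) = dot (u' - v') (u' - v').
Proof.
split=> [|h]; last by rewrite /dist h.
by move/(congr1 (fun r => r ^+ 2)); rewrite !sqr_sqrtr ?dot_ge0.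
Qed.

Lemma distC u v : dist u v = dist v u.
Proof. by apply/dist_eq; rewrite !dotE !mxE; ring. Qed.

Lemma distxx u : dist u u = 0.
Proof. by rewrite /dist subrr dotr0 sqrtr0. Qed.

Lemma dist0_eq u v : dist u v = 0 -> u = v.
Proof.
move/eqP; rewrite /dist sqrtr_eq0 => uv; apply/eqP.
by rewrite -subr_eq0 -dot_eq0 eq_le uv dot_ge0.
Qed.

Lemma dot_reflect_line n a b p : dot n (b - a) = 0 ->
  dot n (reflect_line a b p - a) = - dot n (p - a).
Proof.
rewrite /reflect_line /=; set c := (2 * _ / _) => nba.
by rewrite -[RHS]addr0 -(mulr0 c) -nba !dotE !mxE; ring.
Qed.

Lemma dist_reflect_line a b p : a != b ->
  dist (reflect_line a b p) a = dist p a /\ dist (reflect_line a b p) b = dist p b.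
Proof.
move=> ab; have : dot (b - a) (b - a) != 0 by rewrite dot_eq0 subr_eq0 eq_sym.
rewrite dotE !mxE => ba0.
by split; apply/dist_eq; rewrite /reflect_line !dotE !mxE; field.
Qed.

Definition perp v : pt R := \row_(k < 2) if k == 0 then - v 0 1 else v 0 0.

Lemma dot_perp u v : dot (perp u) v = u 0 0 * v 0 1 - u 0 1 * v 0 0.
Proof. by rewrite dotE !mxE /= addrC mulNr. Qed.

Lemma dot_perpp u : dot (perp u) u = 0.
Proof. by rewrite dot_perp mulrC subrr. Qed.

Lemma dot_perp_eq0 u v : u != 0 -> dot (perp u) v = 0 ->
  v = (dot v u / dot u u) *: u.
Proof.
rewrite -dot_eq0 => uu0 cross0; apply: row2_eq; rewrite !mxE;
  apply: (mulIf uu0); rewrite mulrAC divfK //;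
  move: cross0; rewrite dot_perp !dotE => cross0; apply/eqP; rewrite -subr_eq0; apply/eqP.
- transitivity (- u 0 1 * (u 0 0 * v 0 1 - u 0 1 * v 0 0)); first ring.
  by rewrite cross0 mulr0.
- transitivity (u 0 0 * (u 0 0 * v 0 1 - u 0 1 * v 0 0)); first ring.
  by rewrite cross0 mulr0.
Qed.

Lemma dist_eq_bisector u a b :
  dist u a = dist u b <-> dot (b - a) (u - a) = dot (b - a) (b - a) / 2.
Proof.
have E : dot (b - a) (u - a) =
    dot (b - a) (b - a) / 2 + (dot (u - a) (u - a) - dot (u - b) (u - b)) / 2.
  by rewrite !dotE !mxE; field.
by rewrite dist_eq; split=> h; lra.
Qed.

Lemma in_triangle_dot_le n o K p x y z : in_triangle p x y z ->
  dot n (x - o) <= K -> dot n (y - o) <= K -> dot n (z - o) <= K -> dot n (p - o) <= K.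
Proof.
move=> [s [t [r [s0 [t0 [r0 [str ->]]]]]]] nx ny nz.
have -> : dot n (s *: x + t *: y + r *: z - o) =
    s * dot n (x - o) + t * dot n (y - o) + r * dot n (z - o).
  by rewrite !dotE !mxE (_ : r = 1 - s - t); [ring | lra].
rewrite -[K]mul1r -str !mulrDl.
by rewrite lerD ?lerD ?ler_pM2l.
Qed.

Lemma in_triangle_swap12 {p x y z} : in_triangle p x y z -> in_triangle p y x z.
Proof.
move=> [s [t [r [s0 [t0 [r0 [str ->]]]]]]]; exists t, s, r.
by do !split => //; [rewrite (addrC t) | rewrite (addrC (t *: y))].
Qed.

Lemma in_triangle_swap23 {p x y z} : in_triangle p x y z -> in_triangle p x z y.
Proof.
move=> [s [t [r [s0 [t0 [r0 [str ->]]]]]]]; exists s, r, t.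
by do !split => //; rewrite -addrA;
  [rewrite (addrC r) addrA | rewrite (addrC (t *: y)) addrA].
Qed.

End Plane.

Section Bodies.
Variables (R : realType) (q : 'I_4 -> pt R).

Lemma in_triangle_perm i j k l i' j' k' :
  uniq [:: i; j; k; l] -> uniq [:: i'; j'; k'; l] ->
  in_triangle (q l) (q i) (q j) (q k) -> in_triangle (q l) (q i') (q j') (q k').
Proof.
move=> u + T.
case: (uniq4_cover u i') => ->; case: (uniq4_cover u j') => ->;
  case: (uniq4_cover u k') => ->; rewrite /= !inE ?eqxx ?orbT ?andbF //= => _;
  by [ exact: T | exact: in_triangle_swap12 T | exact: in_triangle_swap23 T
     | exact: in_triangle_swap12 (in_triangle_swap23 T)
     | exact: in_triangle_swap23 (in_triangle_swap12 T)
     | exact: in_triangle_swap12 (in_triangle_swap23 (in_triangle_swap12 T)) ].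
Qed.

Lemma in_triangle_body_le n o K i j k l :
  uniq [:: i; j; k; l] -> in_triangle (q l) (q i) (q j) (q k) ->
  (forall x, x != l -> dot n (q x - o) <= K) -> dot n (q l - o) <= K.
Proof.
rewrite /= !inE !negb_or => /and4P[/and3P[_ _ il] /andP[_ jl] kl _] T le_K.
exact: in_triangle_dot_le T (le_K _ il) (le_K _ jl) (le_K _ kl).
Qed.

End Bodies.

Section Kite.
Variables (R : realType) (q : 'I_4 -> pt R).
Hypothesis q_inj : forall i j, i != j -> q i != q j.

(* The line through bodies [a] and [b] is a symmetry axis exchanging [c] and
   [d]: [n] is normal to it and [t] is the signed offset of [c] from it. *)
Definition kite_frame (a b c d : 'I_4) : Prop :=
  [/\ uniq [:: a; b; c; d], q a != q b,
      dist (q a) (q c) = dist (q a) (q d), dist (q b) (q c) = dist (q b) (q d) &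
      exists (n : pt R) t, [/\ t != 0, dot n (q b - q a) = 0,
                               dot n (q c - q a) = t & dot n (q d - q a) = - t]].

Lemma kite_frame_sym a b c d : kite_frame a b c d -> kite_frame b a c d.
Proof.
move=> [u qab dA dB [n [t [t0 nb nc nd]]]]; split=> //.
- by rewrite uniq_swap.
- by rewrite eq_sym.
exists n, t; move: nb nc nd; rewrite !dotBr => nb nc nd; split=> //; lra.
Qed.

Lemma collinear_on_line o e : e != 0 ->
  (forall x, dot (perp e) (q x - o) = 0) -> collinear_config q.
Proof.
move=> e0 on_line; exists o, e; split=> // x.
exists (dot (q x - o) e / dot e e).
by rewrite -dot_perp_eq0 ?on_line // addrC subrK.
Qed.

Lemma reflect_body_off_axis a b x y : q a != q b -> x != a -> x != b ->
  reflect_line (q a) (q b) (q x) = q y ->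
  [/\ y != a, y != b, dist (q a) (q y) = dist (q a) (q x)
    & dist (q b) (q y) = dist (q b) (q x)].
Proof.
move=> qab xa xb qy; have [dya dyb] := dist_reflect_line (q x) qab.
rewrite qy !(distC (q y)) !(distC (q x)) in dya dyb; split=> //.
- apply: contraNneq (q_inj xa) => ya.
  by apply/eqP/dist0_eq; rewrite distC -dya ya distxx.
- apply: contraNneq (q_inj xb) => yb.
  by apply/eqP/dist0_eq; rewrite distC -dyb yb distxx.
Qed.

Lemma kite_frame_of_kite : kite q -> exists a b c d, kite_frame a b c d.
Proof.
move=> [noncol [a [b [qab axis]]]].
have ab : a != b by apply: contraNneq qab => ->.
have [c [d u]] := uniq4_extend ab.
have [ca cb da db] : [/\ c != a, c != b, d != a & d != b].
  move: u; rewrite /= !inE !negb_or => /and4P[/and3P[_ ac ad] /andP[bc bd] _ _].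
  by rewrite !(eq_sym _ a) !(eq_sym _ b) ac ad bc bd.
pose n := perp (q b - q a); pose side x := dot n (q x - q a).
have side_reflect x y : reflect_line (q a) (q b) (q x) = q y -> side y = - side x.
  by rewrite /side => <-; rewrite dot_reflect_line ?dot_perpp.
have on_axis_collinear : side c = 0 -> side d = 0 -> False.
  move=> sc sd; apply/noncol/(@collinear_on_line (q a) (q b - q a)) => [|x].
    by rewrite subr_eq0 eq_sym.
  by case: (uniq4_cover u x) => ->; [rewrite subrr dotr0 | exact: dot_perpp | |].
have [y qy] := axis c; have [ya yb dya dyb] := reflect_body_off_axis qab ca cb qy.
have yd : y = d.
  case: (uniq4_cover u y) => ey; move: ya yb qy; rewrite ey ?eqxx // => _ _ /side_reflect sc.
  have [y' qy'] := axis d; have [y'a y'b _ _] := reflect_body_off_axis qab da db qy'.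
  exfalso; apply: on_axis_collinear; first lra.
  case: (uniq4_cover u y') => ey'; move: y'a y'b qy'; rewrite ey' ?eqxx //;
    by move=> _ _ /side_reflect; lra.
subst y; have sd := side_reflect _ _ qy.
exists a, b, c, d; split=> //; exists n, (side c); split=> //; last exact: dot_perpp.
by apply/eqP => sc; apply: (on_axis_collinear sc); rewrite sd sc oppr0.
Qed.

Lemma kite_frame_interior a b c d : kite_frame a b c d -> concave q ->
  in_triangle (q b) (q c) (q d) (q a) \/ in_triangle (q a) (q c) (q d) (q b).
Proof.
move=> [u _ _ _ [n [t [t0 nb nc nd]]]] [i [j [k [l [uijkl T]]]]].
have not_interior x : l = x -> dot n (q x - q a) != 0 ->
    (forall y, y != x -> dot n (q x - q a) * dot n (q y - q a) <= 0) -> False.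
  move=> lx sx0 others; subst l.
  suff : dot n (q x - q a) ^+ 2 <= 0 by rewrite leNgt exprn_even_gt0 //= sx0.
  rewrite expr2 -dotZl; apply: (in_triangle_body_le uijkl T) => y yx.
  by rewrite dotZl; exact: others.
have side_t2 : - t * t <= 0 by rewrite mulNr oppr_le0 -expr2 sqr_ge0.
case: (uniq4_cover u l) => el; subst l.
- right; apply: (in_triangle_perm uijkl _ T).
  by rewrite -(rot_uniq 2) [rot _ _]/= uniq_swap.
- by left; apply: (in_triangle_perm uijkl _ T); rewrite -(rot_uniq 2).
- exfalso; apply: (not_interior c erefl); first by rewrite nc.
  move=> y yc; case: (uniq4_cover u y) => ey; move: yc; rewrite ey ?eqxx //= => _;
    by rewrite ?subrr ?dotr0 ?nb ?nc ?nd ?mulr0 // mulrN -mulNr.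
- exfalso; apply: (not_interior d erefl); first by rewrite nd oppr_eq0.
  move=> y yd; case: (uniq4_cover u y) => ey; move: yd; rewrite ey ?eqxx //= => _;
    by rewrite ?subrr ?dotr0 ?nb ?nc ?nd ?mulr0.
Qed.

Lemma concave_kite_frame : kite q -> concave q ->
  exists a b c d, kite_frame a b c d /\ in_triangle (q b) (q c) (q d) (q a).
Proof.
move=> /kite_frame_of_kite [a [b [c [d F]]]] /(kite_frame_interior F) [T|T].
- by exists a, b, c, d.
- by exists b, a, c, d; split=> //; apply: kite_frame_sym.
Qed.

End Kite.

Section Balance.
Variables (R : realType) (mass : 'I_4 -> R) (q : 'I_4 -> pt R) (lam : R).
Hypothesis mass_gt0 : forall i, 0 < mass i.
Hypothesis cc : forall j, - (lam * mass j) *: (q j - cmass mass q) =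
  \sum_(i < 4 | i != j) ((mass i * mass j) / dist (q i) (q j) ^+ 3) *: (q i - q j).

Lemma central_config_dot n x y z w : uniq [:: x; y; z; w] ->
  lam * mass x / (\sum_(i < 4) mass i) *
    (mass y * dot n (q y - q x) + mass z * dot n (q z - q x) + mass w * dot n (q w - q x)) =
  mass y * mass x / dist (q y) (q x) ^+ 3 * dot n (q y - q x) +
  mass z * mass x / dist (q z) (q x) ^+ 3 * dot n (q z - q x) +
  mass w * mass x / dist (q w) (q x) ^+ 3 * dot n (q w - q x).
Proof.
move=> u; have M0 : mass x + mass y + mass z + mass w != 0.
  by apply: lt0r_neq0; rewrite !addr_gt0.
have E := congr1 (dot n) (cc x).
rewrite (sum4_neq _ u) /cmass (sum4 _ u) (sum4 (fun i => mass i *: q i) u) in E.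
rewrite (sum4 _ u); apply: etrans (etrans _ E) _; rewrite !dotE !mxE; [by field | ring].
Qed.

Lemma kite_frame_balance a b c d : kite_frame q a b c d ->
  mass c = mass d \/ lam / (\sum_(i < 4) mass i) = (dist (q c) (q a) ^+ 3)^-1.
Proof.
move=> [u _ dA _ [n [t [t0 nb nc nd]]]].
(* The normal component of the equation at [a] reads
   [lam m_a (m_c - m_d) t / M = m_a (m_c - m_d) t / r_ac^3]. *)
have := central_config_dot n u.
rewrite nb nc nd (distC (q d)) -dA (distC (q a)).
set M := \sum_(i < 4) mass i; set r := dist (q c) (q a) ^+ 3.
move=> /eqP; rewrite -subr_eq0 => /eqP E.
have : mass a * ((mass c - mass d) * t * (lam / M - r^-1)) = 0 by rewrite -E; ring.
move/eqP; rewrite mulf_eq0 gt_eqF //= !mulf_eq0 (negbTE t0) orbF !subr_eq0.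
by case/orP => /eqP; [left | right].
Qed.

Lemma kite_frame_mass_eq a b c d : kite_frame q a b c d ->
  in_triangle (q b) (q c) (q d) (q a) -> mass c = mass d.
Proof.
move=> F T; have [u qab dA dB _] := F.
apply/eqP/contraT => mcd.
have [/eqP|rA] := kite_frame_balance F; first by rewrite (negbTE mcd).
have [/eqP|rB] := kite_frame_balance (kite_frame_sym F); first by rewrite (negbTE mcd).
have dAB : dist (q c) (q a) = dist (q c) (q b).
  apply/eqP; rewrite -(eqrXn2 (n := 3)) ?dist_ge0 //.
  by rewrite -[_ ^+ 3]invrK -rA rB invrK.
have /dist_eq_bisector Bc : dist (q c) (q a) = dist (q c) (q b) := dAB.
have /dist_eq_bisector Bd : dist (q d) (q a) = dist (q d) (q b).
  by rewrite distC -dA distC dAB distC dB distC.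
have ee : 0 < dot (q b - q a) (q b - q a).
  by rewrite lt_neqAle dot_ge0 andbT eq_sym dot_eq0 subr_eq0 eq_sym.
have : dot (q b - q a) (q b - q a) <= dot (q b - q a) (q b - q a) / 2.
  have uT : uniq [:: c; d; a; b] by rewrite -(rot_uniq 2).
  apply: (in_triangle_body_le uT T) => x xb.
  case: (uniq4_cover u x) => ex; move: xb; rewrite ex ?eqxx //= => _.
  - by rewrite subrr dotr0 divr_ge0 ?dot_ge0.
  - by rewrite Bc.
  - by rewrite Bd.
lra.
Qed.

End Balance.

Section MassPairs.
Variables (R : realType) (mass : 'I_4 -> R) (mu nu : R) (i j k l : 'I_4).
Hypotheses (uijkl : uniq [:: i; j; k; l])
  (mi : mass i = mu) (mj : mass j = mu) (mk : mass k = nu) (ml : mass l = nu).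

Lemma mass_pair_values x : mass x = mu \/ mass x = nu.
Proof. by case: (uniq4_cover uijkl x) => ->; auto. Qed.

Lemma mass_pair_complement a b c d : uniq [:: a; b; c; d] ->
  mass c = mass d -> mass a = mass b.
Proof.
move=> u mcd.
have total : mass a + mass b + mass c + mass d = mu + mu + nu + nu.
  by rewrite -(sum4 mass u) (sum4 mass uijkl) mi mj mk ml.
move: total; rewrite -mcd.
by case: (mass_pair_values a) (mass_pair_values b) (mass_pair_values c)
  => -> [] -> [] ->; lra.
Qed.

End MassPairs.

Theorem proposition1 (R : realType) (m : R) (mass : 'I_4 -> R)
    (q : 'I_4 -> 'rV[R]_2) :
  0 < m ->
  (exists i j k l : 'I_4, uniq [:: i; j; k; l] /\
     mass i = 1 /\ mass j = 1 /\ mass k = m /\ mass l = m) ->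
  (forall i j : 'I_4, i != j -> q i != q j) ->
  central_config mass q -> kite q -> concave q ->
  exists i j k l : 'I_4, uniq [:: i; j; k; l] /\
    mass i = mass j /\ mass k = mass l /\
    dist (q k) (q i) = dist (q k) (q j) /\
    dist (q l) (q i) = dist (q l) (q j) /\
    in_triangle (q l) (q i) (q j) (q k).
Proof.
move=> m_gt0 [i [j [k [l [uijkl [mi [mj [mk ml]]]]]]]] q_inj [lam cc] kq cq.
have mass_gt0 x : 0 < mass x.
  by case: (mass_pair_values uijkl mi mj mk ml x) => ->.
have [a [b [c [d [F T]]]]] := concave_kite_frame q_inj kq cq.
have [u _ dA dB _] := F.
have mcd := kite_frame_mass_eq mass_gt0 cc F T.
have mab := mass_pair_complement uijkl mi mj mk ml u mcd.
exists c, d, a, b; do !split => //.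
by rewrite -(rot_uniq 2).
Qed.
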